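(* Let $n\le k$ be positive integers and let $\mathcal{A},\mathcal{B}$ be $I$-structures. There is a homomorphism $f:\mathbb{H}_{n,k}\mathcal{A}\to\mathcal{B}$ if and only if Duplicator has a winning strategy in the game $+\mathrm{Fun}^{k}_{n}(\mathcal{A},\mathcal{B})$.
   Context: Structures are over a finite relational signature $\sigma\cup\{I\}$ with $I$ binary; an $I$-structure is one interpreting $I$ as the identity relation. For $m\in\mathbb{N}$, $[m]=\{1,\dots,m\}$. For a structure $\mathcal{A}$, $\mathbb{T}_k\mathcal{A}$ has universe the nonempty finite lists over $A\times[k]$; $\epsilon_{\mathcal{A}}(s)$ is the first component of the last pair of $s$; a tuple $(s_1,\dots,s_r)$ is in a relation $R^{\mathbb{T}_k\mathcal{A}}$ iff the $s_i$ are pairwise prefix-comparable, $(\epsilon_{\mathcal{A}}(s_1),\dots,\epsilon_{\mathcal{A}}(s_r))\in R^{\mathcal{A}}$, and whenever $s_i$ is a prefix of $s_j$ ending with $(a,p)$, no prefix of $s_j$ properly extending $s_i$ ends with a pair $(a',p)$. A list over $A\times[k]$ is basic if it has at most $n$ pairs with distinct pebble indices; $S_n(s)=[s]$ if $s$ is basic, else $S_n(s)=[a];S_n(t)$ with $s=a\cdot t$ and $a$ the longest basic prefix. For $p\in[k]$ and $S_n(s)=t;[s']$ ($s'$ the last block), $\alpha_n(s,p)=t;[s']$ if $|s'|=n$ or $p$ occurs in $s'$, else $t$. $[s;(a,i)]\approx_n[t;(b,j)]$ iff $a=b$ and $\alpha_n(s,i)=\alpha_n(t,j)$. $\mathbb{H}_{n,k}\mathcal{A}=\mathbb{T}_k\mathcal{A}/{\approx_n}$,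 where a tuple of classes is in a relation iff some choice of representatives is in it in $\mathbb{T}_k\mathcal{A}$. The game $+\mathrm{Fun}^{k}_{n}(\mathcal{A},\mathcal{B})$: positions are partial maps $\pi^a:[k]\rightharpoonup A$, $\pi^b:[k]\rightharpoonup B$, initially empty. Each round Duplicator provides a function $h:A\to B$ with $h(\pi^a(i))=\pi^b(i)$ for all $i$ in the domain of $\pi^a$; Spoiler picks $m\le n$ distinct indices $p_1,\dots,p_m\in[k]$ and elements $a_1,\dots,a_m\in A$; the position is updated by $\pi^a(p_l)=a_l$, $\pi^b(p_l)=h(a_l)$, other values unchanged. Spoiler wins if for some relation symbol $R$ of arity $r$ and indices $i_1,\dots,i_r$, $(\pi^a(i_1),\dots,\pi^a(i_r))\in R^{\mathcal{A}}$ but $(\pi^b(i_1),\dots,\pi^b(i_r))\notin R^{\mathcal{B}}$. Duplicator wins by playing forever without Spoiler winning. *)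

From mathcomp Require Import all_boot.
Set Implicit Arguments. Unset Strict Implicit. Unset Printing Implicit Defensive.

(* A finite relational signature sigma; the full signature is sigma + {I},
   encoded as [option (sym S)] with [None] the binary symbol I. *)
Record signature := Signature { sym : finType; arity : sym -> nat }.

Definition fsym (S : signature) : Type := option (sym S).
Definition far (S : signature) (s : fsym S) : nat :=
  match s with Some s' => arity s' | None => 2 end.

Record structure (S : signature) := Structure {
  car :> Type;
  rel : forall s : fsym S, ('I_(far s) -> car) -> Prop }.

Definition is_I_structure (S : signature) (M : structure S) : Prop :=
  forall x : 'I_2 -> M, @rel S M (None : fsym S) x <-> x ord0 = x ord_max.

Definition hom (S : signature) (M N : structure S) (f : M -> N) : Prop :=
  forall (s : fsym S) (x : 'I_(far s) -> M), @rel S M s x -> @rel S N s (fun i => f (x i)).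

(* Pebble indices [k] = {1..k} are represented by 'I_k = {0..k-1}.
   A nonempty list over A x [k] is represented as a pair (s, c) standing for
   the list s ++ [c] (= rcons s c); this is a bijection with nonempty lists. *)
Definition Tk (A : Type) (k : nat) : Type := (seq (A * 'I_k) * (A * 'I_k))%type.
Definition tlist (A : Type) k (u : Tk A k) : seq (A * 'I_k) := rcons u.1 u.2.
Definition eps (A : Type) k (u : Tk A k) : A := u.2.1.

Definition prefix (T : Type) (s t : seq T) : Prop := exists w, t = s ++ w.

Definition Trel (S : signature) (M : structure S) (k : nat) (s : fsym S)
    (x : 'I_(far s) -> Tk M k) : Prop :=
  (forall i j, prefix (tlist (x i)) (tlist (x j)) \/ prefix (tlist (x j)) (tlist (x i))) /\
  @rel S M s (fun i => eps (x i)) /\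
  (forall i j, prefix (tlist (x i)) (tlist (x j)) ->
     forall (t : seq (M * 'I_k)) (c : M * 'I_k),
       prefix (tlist (x i)) (rcons t c) ->
       size (tlist (x i)) < size (rcons t c) ->
       prefix (rcons t c) (tlist (x j)) ->
       c.2 <> (x i).2.2).

Definition TkS (S : signature) (M : structure S) (k : nat) : structure S :=
  @Structure S (Tk M k) (@Trel S M k).

Definition basic (A : Type) k (n : nat) (s : seq (A * 'I_k)) : bool :=
  (size s <= n) && uniq (map snd s).

Definition lbp (A : Type) k (n : nat) (s : seq (A * 'I_k)) : nat :=
  \max_(m < (size s).+1 | basic n (take m s)) m.

(* S_n computed with fuel; fuel = size s suffices when n > 0 *)
Fixpoint Sn_fuel (A : Type) k (n fuel : nat) (s : seq (A * 'I_k)) : seq (seq (A * 'I_k)) :=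
  match fuel with
  | 0 => [:: s]
  | f.+1 => if basic n s then [:: s]
            else take (lbp n s) s :: Sn_fuel n f (drop (lbp n s) s)
  end.

Definition Sn (A : Type) k (n : nat) (s : seq (A * 'I_k)) : seq (seq (A * 'I_k)) :=
  Sn_fuel n (size s) s.

Definition alpha (A : Type) k (n : nat) (s : seq (A * 'I_k)) (p : 'I_k)
    : seq (seq (A * 'I_k)) :=
  let B := Sn n s in
  let s' := last [::] B in
  let t := take (size B).-1 B in
  if (size s' == n) || (p \in map snd s') then B else t.

Definition approx (A : Type) k (n : nat) (u v : Tk A k) : Prop :=
  u.2.1 = v.2.1 /\ alpha n u.1 u.2.2 = alpha n v.1 v.2.2.

Definition Hcar (S : signature) (M : structure S) (n k : nat) : Type :=
  {X : Tk M k -> Prop | exists u, X = approx n u}.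

Definition Hrel (S : signature) (M : structure S) (n k : nat) (s : fsym S)
    (X : 'I_(far s) -> Hcar M n k) : Prop :=
  exists x : 'I_(far s) -> Tk M k, (forall i, sval (X i) (x i)) /\ @Trel S M k s x.

Definition HS (S : signature) (M : structure S) (n k : nat) : structure S :=
  @Structure S (Hcar M n k) (@Hrel S M n k).

Definition position (A B : Type) (k : nat) : Type :=
  (('I_k -> option A) * ('I_k -> option B))%type.

Definition init_pos (A B : Type) k : position A B k := (fun _ => None, fun _ => None).

Definition smove (A : Type) (k : nat) : Type := seq ('I_k * A).

Definition legal (A : Type) k (n : nat) (mv : smove A k) : bool :=
  (size mv <= n) && uniq (map fst mv).

Definition lookup (A : Type) k (mv : smove A k) (p : 'I_k) : option A :=
  ohead [seq x.2 | x <- mv & x.1 == p].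

Definition update (A B : Type) k (h : A -> B) (mv : smove A k) (P : position A B k)
    : position A B k :=
  (fun p => if lookup mv p is Some a then Some a else P.1 p,
   fun p => if lookup mv p is Some a then Some (h a) else P.2 p).

(* A Duplicator strategy maps the history of Spoiler moves so far
   (most recent first) to the function h she provides next. *)
Definition strategy (A B : Type) (k : nat) : Type := seq (smove A k) -> (A -> B).

Fixpoint pos (A B : Type) k (sg : strategy A B k) (hist : seq (smove A k)) : position A B k :=
  match hist with
  | [::] => init_pos A B k
  | mv :: h => update (sg h) mv (pos sg h)
  end.

Definition consistent (A B : Type) k (h : A -> B) (P : position A B k) : Prop :=
  forall i a, P.1 i = Some a -> P.2 i = Some (h a).

Definition spoiler_wins (S : signature) (M N : structure S) k (P : position M N k) : Prop :=
  exists (s : fsym S) (idx : 'I_(far s) -> 'I_k) (xa : 'I_(far s) -> M) (xb : 'I_(far s) -> N),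
    (forall j, P.1 (idx j) = Some (xa j)) /\ (forall j, P.2 (idx j) = Some (xb j)) /\
    @rel S M s xa /\ ~ @rel S N s xb.

Definition winning (S : signature) (M N : structure S) (n k : nat) (sg : strategy M N k) : Prop :=
  forall hist : seq (smove M k), all (legal n) hist ->
    consistent (sg hist) (pos sg hist) /\ ~ spoiler_wins (pos sg hist).

Definition duplicator_wins (S : signature) (M N : structure S) (n k : nat) : Prop :=
  exists sg : strategy M N k, winning n sg.

From Pilot Require Import Defs.
From mathcomp Require Import all_boot zify.
From Stdlib Require Import Classical ClassicalEpsilon FunctionalExtensionality ProofIrrelevance.
Set Implicit Arguments. Unset Strict Implicit. Unset Printing Implicit Defensive.

(* A play of +Fun^k_n is read as a word of [T_k A] cut into blocks of at most [n]
   pairs with distinct pebble indices, the blocks of [S_n].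

   If Duplicator wins with [sg], send [u] to the answer of [sg] on [eps u] after
   the blocks [alpha_n u] have been played. For a related tuple, let Spoiler play
   the blocks of its longest word: each element then ends a prefix after which its
   pebble is not reused, so the pebbles lie on the tuple in [A] and on its image
   in [B], which is related since [sg] wins. This map factors through [~_n].

   Conversely, let [F] be a homomorphism on [T_k A] constant on [~_n]-classes.
   Duplicator records each round that moves some pebble as one full block (padded
   with other pebble indices, as [n <= k]) and answers [a] by the image under [F]
   of the recorded word extended by [(a, p)]: after full blocks [alpha_n] does not
   depend on [p], and the relation [I] in both structures makes this answer agree
   with the images of pebbles already on [a]. Every pebble then ends a prefix of
   the recorded word after which it is not reused, and lies on the image of that
   prefix, so Spoiler cannot win as [F] is a homomorphism. *)

Section Prefix.
Variable T : Type.
Implicit Types s t w : seq T.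

Lemma list_prefixP s w : Defs.prefix s w <-> take (size s) w = s.
Proof.
split; first by case=> x ->; rewrite take_size_cat.
by move=> E; exists (drop (size s) w); rewrite -{1}(cat_take_drop (size s) w) E.
Qed.

Lemma list_prefix_refl s : Defs.prefix s s.
Proof. by exists [::]; rewrite cats0. Qed.

Lemma list_prefix_trans s t w : Defs.prefix s t -> Defs.prefix t w -> Defs.prefix s w.
Proof. by case=> x -> [y ->]; exists (x ++ y); rewrite catA. Qed.

Lemma list_prefix_total s t w :
  Defs.prefix s w -> Defs.prefix t w -> Defs.prefix s t \/ Defs.prefix t s.
Proof.
move=> /list_prefixP Es /list_prefixP Et.
wlog le_st : s t Es Et / size s <= size t.
  move=> wlog_le; case: (leqP (size s) (size t)) => le; first exact: wlog_le.
  by rewrite or_comm; apply: wlog_le => //; apply: ltnW.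
by left; apply/list_prefixP; rewrite -Et take_takel // -Es.
Qed.

End Prefix.

Lemma notin_map_snd (T : Type) (I : eqType) (r : seq (T * I)) p :
  (p \notin map snd r) = all (fun y => y.2 != p) r.
Proof. by rewrite -has_pred1 has_map -all_predC. Qed.

Lemma map_pair_split (T : Type) (I : eqType) (f : I -> T) (Q : seq I) i :
  i \in Q -> exists c d, [seq (f q, q) | q <- Q] = c ++ (f i, i) :: d.
Proof. by case/splitPr=> Q1 Q2; rewrite map_cat; do 2!eexists. Qed.

Lemma flatten_split (T : Type) (bs : seq (seq T)) s y r :
  flatten bs = s ++ y :: r ->
  exists bs1 c d bs2, bs = bs1 ++ (c ++ y :: d) :: bs2 /\ flatten bs1 ++ c = s.
Proof.
elim: bs s => [|b bs IH] s /=; first by case: s.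
case: (ltnP (size s) (size b)) => [lt_sb|le_bs] E.
  exists [::], s, (take (size b - (size s).+1) r), bs; split => //=.
  have := f_equal (take (size b)) E; rewrite take_size_cat // => {1}->.
  by rewrite take_cat ltnNge (ltnW lt_sb) /= -(subnSK lt_sb).
have Es : s = b ++ drop (size b) s.
  rewrite -{1}(cat_take_drop (size b) s); congr (_ ++ _).
  by rewrite -(@takel_cat (size b) _ s (y :: r) le_bs) -E take_size_cat.
have /IH[bs1 [c [d [bs2 [-> Ec]]]]] : flatten bs = drop (size b) s ++ y :: r.
  by have := f_equal (drop (size b)) E; rewrite drop_size_cat // {1}Es -catA drop_size_cat.
by exists (b :: bs1), c, d, bs2; split => //=; rewrite -catA Ec -Es.
Qed.

Section Live.
Variables (A : Type) (k : nat).
Implicit Types (u : Tk A k) (W : seq (A * 'I_k)).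

Definition live W u : Prop := exists2 r, W = tlist u ++ r & u.2.2 \notin map snd r.

(* The last clause of [Trel], for a single element [u]. *)
Definition unshadowed u W : Prop :=
  forall t c, Defs.prefix (tlist u) (rcons t c) -> size (tlist u) < size (rcons t c) ->
    Defs.prefix (rcons t c) W -> c.2 <> u.2.2.

Lemma unshadowed_cat u r : unshadowed u (tlist u ++ r) <-> u.2.2 \notin map snd r.
Proof.
rewrite notin_map_snd; split.
- move=> unsh; apply/(all_nthP u.2) => j lt_j; apply/eqP.
  apply: (unsh (tlist u ++ take j r) (nth u.2 r j)).
  + by exists (rcons (take j r) (nth u.2 r j)); rewrite rcons_cat.
  + by rewrite size_rcons size_cat ltnS leq_addr.
  + by exists (drop j.+1 r); rewrite rcons_cat -take_nth // -catA cat_take_drop.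
- move=> fresh t c [w1 Ew1] lt_size [w2 Ew2].
  case/lastP: w1 Ew1 => [|w1 y] Ew1; first by move: lt_size; rewrite Ew1 cats0 ltnn.
  rewrite -rcons_cat in Ew1; case/rcons_inj: Ew1 => Et Ec; subst t y.
  have Er : r = rcons w1 c ++ w2.
    by have := f_equal (drop (size (tlist u))) Ew2; rewrite rcons_cat -catA !drop_size_cat.
  by move: fresh; rewrite Er all_cat all_rcons => /andP[/andP[/eqP]].
Qed.

Lemma live_prefix W u : live W u -> Defs.prefix (tlist u) W.
Proof. by case=> r ->; exists r. Qed.

Lemma live_cat W r u :
  live W u -> u.2.2 \notin map snd r -> live (W ++ r) u.
Proof.
case=> r0 -> fresh0 fresh; exists (r0 ++ r); first by rewrite catA.
by rewrite map_cat mem_cat negb_or fresh0.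
Qed.

Lemma live_block W c a i d :
  uniq (map snd (c ++ (a, i) :: d)) -> live (W ++ c ++ (a, i) :: d) (W ++ c, (a, i)).
Proof.
rewrite map_cat cat_uniq /= => /and4P[_ _ i_d _].
by exists d; rewrite // /tlist /= cat_rcons catA.
Qed.

End Live.

Section Trel.
Variables (S : signature) (M : structure S) (k : nat) (s : Defs.fsym S).
Implicit Type x : 'I_(far s) -> Tk M k.

(* The longest word of a related tuple contains all the others. *)
Lemma Trel_common_word x : Trel x -> exists W, forall i, live W (x i).
Proof.
move=> [comparable [_ unsh]].
case: (far s) x comparable unsh => [|r] x comparable unsh; first by exists [::] => -[].
have card_gt0 : 0 < #|'I_r.+1| by rewrite card_ord.
have [m Em] := @eq_bigmax _ (fun i => size (tlist (x i))) card_gt0.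
exists (tlist (x m)) => i.
have [w Ew] : Defs.prefix (tlist (x i)) (tlist (x m)).
  case: (comparable i m) => // -[w Ew].
  have : size (tlist (x i)) <= size (tlist (x m)).
    by rewrite -Em; apply: (@leq_bigmax _ (fun i => size (tlist (x i)))).
  rewrite Ew size_cat -[X in _ <= X]addn0 leq_add2l leqn0 => /nilP ->.
  by rewrite cats0; apply: list_prefix_refl.
exists w => //; apply/unshadowed_cat; rewrite -Ew.
by apply: unsh; exists w.
Qed.

Lemma TrelP x :
  Trel x <-> (exists W, forall i, live W (x i)) /\ Defs.rel (fun i => eps (x i)).
Proof.
split=> [xT|[[W liveW] xR]]; first by split; [apply: Trel_common_word | case: xT => _ []].
split; [|split=> //].
- by move=> i j; apply: list_prefix_total (live_prefix (liveW i)) (live_prefix (liveW j)).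
- move=> i j _ t c le_ic lt_ic le_cj.
  have [r Er fresh] := liveW i.
  have unsh : unshadowed (x i) W by rewrite Er; apply/unshadowed_cat.
  apply: unsh le_ic lt_ic _.
  exact: list_prefix_trans le_cj (live_prefix (liveW j)).
Qed.

End Trel.

Section Quotient.
Variables (S : signature) (A B : structure S) (n k : nat).

Definition cls (u : Tk A k) : HS A n k := exist _ (approx n u) (ex_intro _ u erefl).

Lemma cls_approx (u v : Tk A k) : approx n u v -> cls u = cls v.
Proof.
case=> Ea Ealpha; have E : approx n u = approx n v.
  by apply: functional_extensionality => w; rewrite /approx Ea Ealpha.
rewrite /cls; move: (ex_intro _ u _) (ex_intro _ v _); rewrite E => p1 p2.
by rewrite (proof_irrelevance _ p1 p2).
Qed.

Lemma hom_HS_iff :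
  (exists f : HS A n k -> B, hom f) <->
  exists F : TkS A k -> B, hom F /\ forall u v, approx n u v -> F u = F v.
Proof.
split=> [[f f_hom]|[F [F_hom F_approx]]].
  exists (fun u => f (cls u)); split=> [s x xR|u v /cls_approx -> //].
  by apply: (f_hom s (fun i => cls (x i))); exists x.
pose rep (X : HS A n k) := sval (constructive_indefinite_description _ (svalP X)).
exists (fun X => F (rep X)) => s X [x [Xx xR]].
suff -> : (fun i => F (rep (X i))) = (fun i => F (x i)) by apply: F_hom.
apply: functional_extensionality => i; apply: F_approx.
by rewrite /rep; case: constructive_indefinite_description => u /= <-.
Qed.

End Quotient.

Section Blocks.
Variables (A : Type) (k n : nat).
Local Notation block := (seq (A * 'I_k)).
Implicit Types (b c d s : block) (bs : seq block).

Lemma basic_catl s t : basic n (s ++ t) -> basic n s.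
Proof.
rewrite /basic size_cat map_cat cat_uniq => /andP[le_n /andP[-> _]].
by rewrite andbT (leq_trans _ le_n) ?leq_addr.
Qed.

Lemma basic_rconsN b y :
  basic n b -> ~~ basic n (rcons b y) -> (size b == n) || (y.2 \in map snd b).
Proof.
rewrite /basic size_rcons map_rcons rcons_uniq => /andP[le_n ->].
rewrite andbT negb_and -ltnNge ltnS negbK => /orP[ge_n|->]; last by rewrite orbT.
by rewrite eqn_leq le_n ge_n.
Qed.

Lemma lbp_cat b y r : basic n b -> ~~ basic n (rcons b y) -> lbp n (b ++ y :: r) = size b.
Proof.
move=> bb bbyN; apply/eqP; rewrite eqn_leq; apply/andP; split.
- apply/bigmax_leqP => i bi; rewrite leqNgt; apply/negP => lt_bi.
  have Ei : take i (b ++ y :: r) = rcons b y ++ take (i - (size b).+1) r.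
    by rewrite take_cat ltnNge (ltnW lt_bi) /= -(subnSK lt_bi) /= -cats1 -catA.
  by move: bi; rewrite Ei => /basic_catl; apply/negP.
- have lt_b : size b < (size (b ++ y :: r)).+1 by rewrite size_cat ltnS leq_addr.
  have := @leq_bigmax_cond _ (fun i : 'I_(size (b ++ y :: r)).+1 => basic n (take i (b ++ y :: r)))
    (fun i => nat_of_ord i) (Ordinal lt_b).
  by rewrite /= take_size_cat //; apply.
Qed.

Definition blocks_link b bs : bool :=
  if bs is (y :: _) :: _ then ~~ basic n (rcons b y) else true.

(* The blocks [bs] are those of the decomposition [S_n] of [flatten bs] (see [Sn_greedy]). *)
Fixpoint greedy bs : bool :=
  if bs is b :: bs' then [&& basic n b, 0 < size b, blocks_link b bs' & greedy bs'] else true.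

Definition blocks_linkr bs b : bool :=
  if bs is [::] then true else if b is y :: _ then ~~ basic n (rcons (last [::] bs) y) else true.

Lemma greedy_rcons bs b :
  greedy (rcons bs b) = [&& greedy bs, basic n b, 0 < size b & blocks_linkr bs b].
Proof.
elim: bs => [|b0 bs IH] /=; first by rewrite !andbT.
rewrite IH; case: bs {IH} => [|b1 bs] /=; last by rewrite -!andbA.
case: b => [|y b] /=; first by rewrite !andbF.
change (blocks_linkr [:: b0] (y :: b)) with (~~ basic n (rcons b0 y)).
rewrite !andbT.
by case: (basic n b0) (0 < size b0) (basic n (rcons b0 y)) (basic n (y :: b)) => [] [] [] [].
Qed.

Lemma greedy_catl bs1 bs2 : greedy (bs1 ++ bs2) -> greedy bs1.
Proof.
elim/last_ind: bs2 => [|bs2 b IH]; first by rewrite cats0.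
by rewrite -rcons_cat greedy_rcons => /andP[/IH].
Qed.

Lemma greedy_basic bs : greedy bs -> all (basic n) bs.
Proof. by elim: bs => //= b bs IH /and4P[-> _ _ /IH]. Qed.

Lemma greedy_size_flatten bs : greedy bs -> size bs <= size (flatten bs).
Proof.
elim: bs => //= b bs IH /and4P[_ b_gt0 _ /IH le_bs].
by rewrite size_cat -add1n; apply: leq_add.
Qed.

Lemma Sn_fuel_greedy bs f :
  greedy bs -> 0 < size bs -> size bs <= f.+1 -> Sn_fuel n f (flatten bs) = bs.
Proof.
elim: bs f => [|b bs IH] f //= /and4P[bb b_gt0 link gr] _.
case: bs IH link gr => [|[|y b1] bs] IH link gr.
- by rewrite cats0; case: f => //= f _; rewrite bb.
- by case/and4P: gr.
case: f => [|f] //= le_f.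
have -> : basic n (b ++ (y :: b1) ++ flatten bs) = false.
  by apply/negP; rewrite -cat_rcons => /basic_catl; apply/negP.
by rewrite lbp_cat // take_size_cat // drop_size_cat // (IH f).
Qed.

Lemma Sn_greedy bs : greedy bs -> 0 < size bs -> Sn n (flatten bs) = bs.
Proof.
move=> gr bs_gt0; apply: Sn_fuel_greedy => //.
exact: leq_trans (greedy_size_flatten gr) (leqnSn _).
Qed.

Hypothesis n_gt0 : 0 < n.

Lemma greedy_exists W : exists2 bs, greedy bs & flatten bs = W.
Proof.
elim/last_ind: W => [|W y [bs gr <-]]; first by exists [::].
have basic_y : basic n [:: y] by rewrite /basic /= n_gt0.
case/lastP: bs gr => [|bs b] gr; first by exists [:: [:: y]]; rewrite /= ?basic_y.
move: (gr); rewrite greedy_rcons => /and4P[gr_bs bb b_gt0 link].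
have linkr_y bs' b' : blocks_linkr (rcons bs' b') [:: y] = ~~ basic n (rcons b' y).
  by case: bs' => //= b0 bs'; rewrite last_rcons.
case bby: (basic n (rcons b y)).
  exists (rcons bs (rcons b y)); last by rewrite !flatten_rcons rcons_cat.
  by rewrite greedy_rcons gr_bs bby size_rcons; case: b {bb gr bby} b_gt0 link.
exists (rcons (rcons bs b) [:: y]); last by rewrite flatten_rcons cats1.
by rewrite greedy_rcons gr basic_y linkr_y bby.
Qed.

Lemma alpha_nil p : alpha n [::] p = [::] :> seq block.
Proof. by rewrite /alpha /Sn /=; case: n n_gt0. Qed.

(* [alpha] drops the unfinished block [c], which has fewer than [n] pairs and
   does not use [p], and keeps the last block of [bs1], which [(a, p)] could not
   extend. *)
Lemma alpha_greedy bs1 bs2 c a p d :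
  greedy (bs1 ++ (c ++ (a, p) :: d) :: bs2) -> alpha n (flatten bs1 ++ c) p = bs1.
Proof.
rewrite -cat_rcons => /greedy_catl; rewrite greedy_rcons => /and4P[gr1 bb _ link].
case: c bb link => [|y c] bb link.
  rewrite cats0; case/lastP: bs1 gr1 link => [|bs b] gr1 link; first exact: alpha_nil.
  rewrite /alpha Sn_greedy ?size_rcons // last_rcons.
  move: (gr1); rewrite greedy_rcons => /and4P[_ b_basic _ _].
  have bpN : ~~ basic n (rcons b (a, p)) by case: bs {gr1} link => [|b0 bs] /=; rewrite ?last_rcons.
  by rewrite (basic_rconsN b_basic bpN).
have gr : greedy (rcons bs1 (y :: c)).
  by rewrite greedy_rcons gr1 (basic_catl bb).
rewrite /alpha -flatten_rcons Sn_greedy ?size_rcons // last_rcons /= -cats1 take_size_cat //.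
move: bb; rewrite /basic size_cat map_cat cat_uniq /= => /andP[le_n /and3P[_ fresh _]].
have -> : ((size c).+1 == n) = false by apply/negP => /eqP En; move: le_n; rewrite -En; lia.
by move: fresh; rewrite inE negb_or => /andP[/negPf ->].
Qed.

Definition full bs : bool := all (fun b => basic n b && (size b == n)) bs.

Lemma greedy_full_rcons bs b : full bs -> basic n b -> 0 < size b -> greedy (rcons bs b).
Proof.
elim/last_ind: bs b => [|bs c IH] b; first by rewrite /= => _ -> ->.
rewrite /full all_rcons => /andP[/andP[bc /eqP size_c] fullbs] bb b_gt0.
rewrite greedy_rcons bb b_gt0 IH ?size_c //=.
by case: b {bb b_gt0} => [|y b]; case: bs {IH fullbs} => [|b0 bs];
  rewrite //= ?last_rcons /basic size_rcons size_c ltnn.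
Qed.

Lemma alpha_full bs p : full bs -> alpha n (flatten bs) p = bs.
Proof.
case/lastP: bs => [|bs b]; first by rewrite alpha_nil.
rewrite /full all_rcons => /andP[/andP[bb /eqP size_b] fullbs].
have gr : greedy (rcons bs b) by apply: greedy_full_rcons; rewrite ?size_b.
by rewrite /alpha Sn_greedy ?size_rcons // last_rcons size_b eqxx.
Qed.

End Blocks.

Section Positions.
Variables (A B : Type) (k : nat).
Implicit Types (mv : smove A k) (q : 'I_k).

Lemma lookup_cons mv q' a q :
  lookup ((q', a) :: mv) q = if q' == q then Some a else lookup mv q.
Proof. by rewrite /lookup /=; case: (q' == q). Qed.

Lemma lookup_notin mv q : q \notin map fst mv -> lookup mv q = None.
Proof.
elim: mv => [|[q' a] mv IH] //=; rewrite inE negb_or => /andP[q'q /IH].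
by rewrite lookup_cons eq_sym (negPf q'q).
Qed.

Lemma lookup_cat_notin mv1 mv2 q a :
  q \notin map fst mv1 -> lookup (mv1 ++ (q, a) :: mv2) q = Some a.
Proof.
elim: mv1 => [|[q' a'] mv IH] /=; first by rewrite lookup_cons eqxx.
by rewrite inE negb_or lookup_cons eq_sym => /andP[/negPf -> /IH].
Qed.

Lemma lookup_Some_mem mv q a : lookup mv q = Some a -> q \in map fst mv.
Proof.
elim: mv => [|[q' a'] mv IH] //=; rewrite lookup_cons inE.
by case: eqP => [->|_ /IH ->]; rewrite ?eqxx ?orbT.
Qed.

Lemma pos_cat_untouched (sg : strategy A B k) hs h0 q :
  all (fun mv => q \notin map fst mv) hs ->
  (pos sg (hs ++ h0)).1 q = (pos sg h0).1 q /\ (pos sg (hs ++ h0)).2 q = (pos sg h0).2 q.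
Proof.
elim: hs => [|mv hs IH] //= /andP[q_mv /IH[E1 E2]].
by rewrite /update /= lookup_notin.
Qed.

End Positions.

Section BlockMoves.
Variables (A : Type) (k : nat).
Implicit Types (b c d : seq (A * 'I_k)) (bs : seq (seq (A * 'I_k))).

Definition block_move b : smove A k := [seq (y.2, y.1) | y <- b].

Definition blocks_history bs : seq (smove A k) := rev (map block_move bs).

Lemma fst_block_move b : map fst (block_move b) = map snd b.
Proof. by rewrite -map_comp. Qed.

Lemma lookup_block_move c a p d :
  p \notin map snd c -> lookup (block_move (c ++ (a, p) :: d)) p = Some a.
Proof. by rewrite /block_move map_cat -fst_block_move; apply: lookup_cat_notin. Qed.

Lemma blocks_history_cat bs1 b bs2 :
  blocks_history (bs1 ++ b :: bs2) = blocks_history bs2 ++ block_move b :: blocks_history bs1.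
Proof. by rewrite /blocks_history map_cat rev_cat /= rev_cons cat_rcons. Qed.

Lemma blocks_history_notin bs p :
  p \notin map snd (flatten bs) -> all (fun mv => p \notin map fst mv) (blocks_history bs).
Proof.
rewrite all_rev all_map; elim: bs => //= b bs IH.
by rewrite map_cat mem_cat negb_or fst_block_move => /andP[-> /IH].
Qed.

Lemma legal_blocks_history n bs : all (basic n) bs -> all (legal n) (blocks_history bs).
Proof.
rewrite all_rev all_map => /sub_all; apply=> b.
by rewrite /legal /= size_map fst_block_move.
Qed.

End BlockMoves.

Section StrategyMap.
Variables (S : signature) (A B : structure S) (n k : nat).
Hypothesis n_gt0 : 0 < n.
Variable sg : strategy A B k.

Definition strategy_map (u : Tk A k) : B := sg (blocks_history (alpha n u.1 u.2.2)) u.2.1.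

(* The pair ending [tlist u] lies in the block played right after the blocks
   [alpha n u.1 u.2.2], so Duplicator answered it by [strategy_map u]. *)
Lemma pos_blocks_history bs (u : Tk A k) :
  greedy n bs -> live (flatten bs) u ->
  (pos sg (blocks_history bs)).1 u.2.2 = Some u.2.1 /\
  (pos sg (blocks_history bs)).2 u.2.2 = Some (strategy_map u).
Proof.
case: u => s [a p] /= gr [r]; rewrite /tlist /= cat_rcons => E p_r.
have [bs1 [c [d [bs2 [Ebs Ec]]]]] := flatten_split E.
have Er : r = d ++ flatten bs2.
  move: E; rewrite Ebs flatten_cat /= -Ec -!catA /=.
  by move/(f_equal (drop (size (flatten bs1 ++ c)))); rewrite !catA !drop_size_cat //; case.
have untouched : all (fun mv => p \notin map fst mv) (blocks_history bs2).
  by apply: blocks_history_notin; move: p_r; rewrite Er map_cat mem_cat negb_or => /andP[].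
rewrite Ebs in gr; move: (gr); rewrite -cat_rcons => /greedy_catl.
rewrite greedy_rcons /basic map_cat cat_uniq /= negb_or.
case/and4P=> _ /and4P[_ _ /andP[p_c _] _] _ _.
rewrite /strategy_map /= -Ec (alpha_greedy n_gt0 gr) Ebs blocks_history_cat.
have [-> ->] :=
  pos_cat_untouched sg (block_move (c ++ (a, p) :: d) :: blocks_history bs1) untouched.
by rewrite /update /= lookup_block_move.
Qed.

Lemma strategy_map_hom : winning n sg -> hom (strategy_map : TkS A k -> B).
Proof.
move=> sg_win s x /TrelP[[W liveW] xR].
have [bs gr EW] := greedy_exists n_gt0 W; subst W.
have [_ not_won] := sg_win _ (legal_blocks_history (greedy_basic gr)).
apply: NNPP => xRN; apply: not_won.
have posx j := pos_blocks_history gr (liveW j).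
exists s, (fun j => (x j).2.2), (fun j => eps (x j)), (fun j => strategy_map (x j)).
by split; [|split=> //] => j; case: (posx j).
Qed.

End StrategyMap.

Section DuplicatorStrategy.
Variables (S : signature) (A B : structure S) (n k : nat).
Hypotheses (A_I : is_I_structure A) (B_I : is_I_structure B).
Hypotheses (n_gt0 : 0 < n) (n_le_k : n <= k).
Variable F : TkS A k -> B.
Hypotheses (F_hom : hom F) (F_approx : forall u v, approx n u v -> F u = F v).
Variable p0 : 'I_k.

Local Notation word := (seq (A * 'I_k)).
Implicit Types (bs : seq word) (P : position A B k) (mv : smove A k).

(* [u] and [v] are related by [I] in [T_k A], and [I] is equality in [B]. *)
Lemma F_live_eq W (u v : Tk A k) : live W u -> live W v -> u.2.1 = v.2.1 -> F u = F v.
Proof.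
move=> live_u live_v Euv.
pose x (i : 'I_2) := if i == ord0 then u else v.
have xR : @Trel S A k None x.
  by apply/TrelP; split; [exists W => i; rewrite /x; case: (i == ord0) | apply/A_I].
by have /B_I := F_hom xR.
Qed.

Lemma F_full_pebble bs a p p' :
  full n bs -> F (flatten bs, (a, p)) = F (flatten bs, (a, p')).
Proof. by move=> fullbs; apply: F_approx; split; rewrite //= !alpha_full. Qed.

Lemma F_live_extend bs (u : Tk A k) p :
  live (flatten bs) u -> p != u.2.2 -> F u = F (flatten bs, (u.2.1, p)).
Proof.
move=> live_u p_u; apply: (F_live_eq (W := rcons (flatten bs) (u.2.1, p))) => //.
  by rewrite -cats1; apply: live_cat => //=; rewrite inE eq_sym.
by exists [::]; rewrite ?cats0.
Qed.

(* [bs] are the blocks Spoiler is deemed to have played so far. *)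
Definition represented bs P : Prop :=
  full n bs /\ forall i a, P.1 i = Some a ->
    exists s, live (flatten bs) (s, (a, i)) /\ P.2 i = Some (F (s, (a, i))).

Definition valid_answer bs P (a : A) (b : B) : Prop :=
  (exists i, P.1 i = Some a /\ P.2 i = Some b) \/
  (~ (exists i b', P.1 i = Some a /\ P.2 i = Some b') /\ b = F (flatten bs, (a, p0))).

Definition answer bs P (a : A) : B :=
  epsilon (inhabits (F (flatten bs, (a, p0)))) (valid_answer bs P a).

Lemma answerP bs P a : valid_answer bs P a (answer bs P a).
Proof.
apply: epsilon_spec.
have [[i [b' Eib]]|unpebbled] := classic (exists i b', P.1 i = Some a /\ P.2 i = Some b').
  by exists b'; left; exists i.
by exists (F (flatten bs, (a, p0))); right.
Qed.

Lemma answer_pebbled bs P i a :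
  represented bs P -> P.1 i = Some a -> P.2 i = Some (answer bs P a).
Proof.
move=> [_ rep] Pi.
have [s [live_s Ps]] := rep i a Pi; rewrite Ps.
case: (answerP bs P a) => [[j [Pj Pj2]]|[unpebbled _]]; last first.
  by case: unpebbled; exists i, (F (s, (a, i))).
have [t [live_t Pt2]] := rep j a Pj; rewrite Pj2 in Pt2; rewrite Pt2.
by congr Some; apply: F_live_eq live_s live_t _.
Qed.

(* A pebble [p != j] is needed to relate, through [I], the word ending with
   pebble [j] on [a] to its extension by [(a, p)]. *)
Lemma answer_fresh bs P a i :
  represented bs P -> (forall j, P.1 j = Some a -> exists p, p != j) ->
  answer bs P a = F (flatten bs, (a, i)).
Proof.
move=> [fullbs rep] other.
case: (answerP bs P a) => [[j [Pj Pj2]]|[_ ->]]; last exact: F_full_pebble.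
have [s [live_s]] := rep j a Pj; rewrite Pj2 => -[->].
have [p pj] := other j Pj.
by rewrite (F_live_extend live_s pj); apply: F_full_pebble.
Qed.

Lemma F_block_entry bs c a i d :
  full n bs -> basic n (c ++ (a, i) :: d) -> F (flatten bs ++ c, (a, i)) = F (flatten bs, (a, i)).
Proof.
move=> fullbs bb; apply: F_approx; split=> //=; rewrite alpha_full //.
apply: (@alpha_greedy _ _ _ n_gt0 bs [::] c a i d).
by rewrite cats1; apply: greedy_full_rcons; rewrite // size_cat addnS.
Qed.

(* Putting a pebble back on the element it already lies on is not a move. *)
Definition moved P mv (q : 'I_k) : bool :=
  if lookup mv q is Some a then
    if excluded_middle_informative (P.1 q = Some a) then false else true
  else false.

Definition moved_pebbles P mv : seq 'I_k := [seq q <- enum 'I_k | moved P mv q].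

Definition block_pebbles P mv : seq 'I_k :=
  moved_pebbles P mv ++
  take (n - size (moved_pebbles P mv)) [seq q <- enum 'I_k | q \notin moved_pebbles P mv].

Lemma mem_moved_pebbles P mv q : (q \in moved_pebbles P mv) = moved P mv q.
Proof. by rewrite mem_filter mem_enum andbT. Qed.

Lemma size_moved_pebbles P mv : legal n mv -> size (moved_pebbles P mv) <= n.
Proof.
case/andP=> size_mv _; apply: leq_trans size_mv; rewrite -(size_map fst).
apply: uniq_leq_size => [|q]; first exact/filter_uniq/enum_uniq.
rewrite mem_moved_pebbles /moved; case E: (lookup mv q) => // _.
exact: lookup_Some_mem E.
Qed.

Lemma uniq_block_pebbles P mv : uniq (block_pebbles P mv).
Proof.
rewrite cat_uniq; apply/and3P; split; first exact/filter_uniq/enum_uniq; last first.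
  exact/take_uniq/filter_uniq/enum_uniq.
by apply/hasP => -[q /mem_take]; rewrite mem_filter => /andP[/negPf ->].
Qed.

Lemma size_block_pebbles P mv : legal n mv -> size (block_pebbles P mv) = n.
Proof.
move=> leg; have le_n := size_moved_pebbles P leg.
have size_rest : size (moved_pebbles P mv) +
                 size [seq q <- enum 'I_k | q \notin moved_pebbles P mv] = k.
  rewrite !size_filter -[RHS](size_enum_ord k) -(count_predC (mem (moved_pebbles P mv))).
  by congr (_ + _); apply: eq_count => q; rewrite /= mem_moved_pebbles.
rewrite size_cat size_takel; first by lia.
by rewrite leq_subLR size_rest.
Qed.

Lemma update_unmoved bs P mv q :
  represented bs P -> ~~ moved P mv q ->
  (update (answer bs P) mv P).1 q = P.1 q /\ (update (answer bs P) mv P).2 q = P.2 q.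
Proof.
move=> repP; rewrite /moved /update /=; case: (lookup mv q) => [a|] //.
by case: excluded_middle_informative => // Pq _; rewrite Pq (answer_pebbled repP Pq).
Qed.

Lemma update_answer bs P mv q a :
  represented bs P -> (update (answer bs P) mv P).1 q = Some a ->
  (update (answer bs P) mv P).2 q = Some (answer bs P a).
Proof.
move=> repP; rewrite /update /=; case: (lookup mv q) => [a' [<-]|] //.
exact: answer_pebbled.
Qed.

Lemma unmoved_update bs P mv q a :
  P.1 q = Some a -> (update (answer bs P) mv P).1 q = Some a -> ~~ moved P mv q.
Proof.
rewrite /moved /update /=; case: (lookup mv q) => [a'|] // Pq [->].
by case: excluded_middle_informative.
Qed.

Definition new_block bs P mv (d : A) : word :=
  [seq (odflt d ((update (answer bs P) mv P).1 q), q) | q <- block_pebbles P mv].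

(* The default [d] only fills the padding pebbles that lie nowhere, on which
   [represented] imposes nothing. *)
Definition next_blocks bs P mv : seq word :=
  if mv is (_, d) :: _ then
    if nilp (moved_pebbles P mv) then bs else rcons bs (new_block bs P mv d)
  else bs.

Fixpoint dup_state (hist : seq (smove A k)) : seq word * position A B k :=
  if hist is mv :: h then
    let: (bs, P) := dup_state h in (next_blocks bs P mv, update (answer bs P) mv P)
  else ([::], init_pos A B k).

Definition dup_strategy : strategy A B k :=
  fun hist => answer (dup_state hist).1 (dup_state hist).2.

Lemma pos_dup_strategy hist : pos dup_strategy hist = (dup_state hist).2.
Proof. by elim: hist => //= mv h ->; rewrite /dup_strategy; case: (dup_state h). Qed.

Lemma represented_unmoved bs P mv :
  represented bs P -> (forall q, ~~ moved P mv q) ->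
  represented bs (update (answer bs P) mv P).
Proof.
move=> repP unmoved; have [fullbs rep] := repP; split=> // i a.
by have [-> ->] := update_unmoved repP (unmoved i); apply: rep.
Qed.

Lemma represented_new_block bs P mv d :
  represented bs P -> legal n mv -> ~~ nilp (moved_pebbles P mv) ->
  represented (rcons bs (new_block bs P mv d)) (update (answer bs P) mv P).
Proof.
move=> repP leg moved_ne; have [fullbs rep] := repP.
have snd_blk : map snd (new_block bs P mv d) = block_pebbles P mv.
  by rewrite -map_comp map_id.
have blk_basic : basic n (new_block bs P mv d).
  by rewrite /basic snd_blk size_map size_block_pebbles // leqnn uniq_block_pebbles.
split=> [|i a P'i]; first by rewrite /full all_rcons blk_basic size_map size_block_pebbles // eqxx.
rewrite flatten_rcons; case iQ : (i \in block_pebbles P mv); last first.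
  have unmoved_i : ~~ moved P mv i.
    by rewrite -mem_moved_pebbles; apply: contraFN iQ; rewrite mem_cat => ->.
  have [E1 E2] := update_unmoved repP unmoved_i; rewrite E1 in P'i.
  have [s [live_s Ps]] := rep i a P'i; exists s; split; last by rewrite E2.
  by apply: live_cat; rewrite //= snd_blk iQ.
have [c [e Eblk]] := map_pair_split (fun q => odflt d ((update (answer bs P) mv P).1 q)) iQ.
rewrite -/(new_block bs P mv d) P'i /= in Eblk.
exists (flatten bs ++ c); split.
  by rewrite Eblk; apply: live_block; rewrite -Eblk snd_blk uniq_block_pebbles.
have entry : F (flatten bs ++ c, (a, i)) = F (flatten bs, (a, i)).
  by apply: (F_block_entry (d := e)); rewrite // -Eblk.
rewrite (update_answer repP P'i) entry; congr Some.
apply: answer_fresh => // j Pj; have [Eji|ji] := eqVneq j i; last by exists i; rewrite eq_sym.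
subst j.
case Em: (moved_pebbles P mv) moved_ne => [|q qs] // _; exists q.
apply: (contraNneq _ (unmoved_update Pj P'i)) => <-.
by rewrite -mem_moved_pebbles Em mem_head.
Qed.

Lemma represented_next bs P mv :
  represented bs P -> legal n mv ->
  represented (next_blocks bs P mv) (update (answer bs P) mv P).
Proof.
move=> repP leg; rewrite /next_blocks.
case: mv leg => [|[p d] mv] leg; first exact: represented_unmoved.
case: ifPn => [/nilP none|]; last exact: represented_new_block.
by apply: (represented_unmoved repP) => q; rewrite -mem_moved_pebbles none.
Qed.

Lemma represented_dup_state hist :
  all (legal n) hist -> represented (dup_state hist).1 (dup_state hist).2.
Proof.
elim: hist => [|mv h IH] /=; first by split=> // i a.
by case/andP=> leg /IH; case: (dup_state h) => bs P /= repP; apply: represented_next.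
Qed.

Lemma represented_spoiler_loses bs P : represented bs P -> ~ spoiler_wins P.
Proof.
case=> _ rep [s [idx [xa [xb [Pa [Pb [xaR xbRN]]]]]]].
have witness j := constructive_indefinite_description _ (rep _ _ (Pa j)).
pose x j : Tk A k := (sval (witness j), (xa j, idx j)).
apply: xbRN; have -> : xb = (fun j => F (x j)).
  apply: functional_extensionality => j; move: (Pb j).
  by rewrite /x; case: (witness j) => s' [_ Ps] /=; rewrite Ps => -[->].
apply: F_hom; apply/TrelP; split=> //.
by exists (flatten bs) => j; rewrite /x; case: (witness j) => s' [].
Qed.

Lemma dup_strategy_winning : winning n dup_strategy.
Proof.
move=> hist leg; rewrite pos_dup_strategy.
have repP := represented_dup_state leg; split; last exact: represented_spoiler_loses repP.
by move=> i a; apply: answer_pebbled.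
Qed.

End DuplicatorStrategy.

Theorem lemma3p10 (S : signature) (n k : nat) (A B : structure S) :
  0 < n -> n <= k -> is_I_structure A -> is_I_structure B ->
  (exists f : HS A n k -> B, hom f) <-> duplicator_wins A B n k.
Proof.
move=> n_gt0 n_le_k A_I B_I; rewrite hom_HS_iff; split.
  case=> F [F_hom F_approx].
  by exists (dup_strategy n F (Ordinal (leq_trans n_gt0 n_le_k))); apply: dup_strategy_winning.
case=> sg sg_win; exists (strategy_map n sg); split; first exact: strategy_map_hom.
by move=> u v [Ea Ealpha]; rewrite /strategy_map Ea Ealpha.
Qed.
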